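(* (a) If \((X,d)\) is an ultrametric space and \(f\colon[0,\infty)\to[0,\infty)\) is ultrametric-pseudoultrametric-preserving, then either \(f\circ d\) is an ultrametric on \(X\), or there is \(r_0>0\) such that \(f(d(x,y))=0\) holds for all \(x,y\in X\) with \(0<d(x,y)<r_0\). (b) Conversely, suppose \((Y,\rho)\) is a pseudoultrametric space such that \(\rho\) is not an ultrametric and there is \(r_0>0\) such that \(\rho(x,y)=0\) holds whenever \(x,y\in Y\) and \(\rho(x,y)<r_0\). Then there exist an ultrametric-pseudoultrametric-preserving function \(f\colon[0,\infty)\to[0,\infty)\) and an ultrametric \(d\) on \(Y\) such that \(\rho=f\circ d\).
   Context: A pseudoultrametric on a set \(X\) is a symmetric function \(d\colon X\times X\to[0,\infty)\) with \(d(x,x)=0\) for all \(x\in X\) and satisfying \(d(x,y)\le \max\{d(x,z),d(z,y)\}\) for all \(x,y,z\in X\). An ultrametric is a pseudoultrametric with \(d(x,y)=0\) only if \(x=y\). A function \(f\colon[0,\infty)\to[0,\infty)\) is ultrametric-pseudoultrametric-preserving if \(f\circ d\) is a pseudoultrametric for every ultrametric space \((X,d)\). *)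

From Stdlib Require Import Reals.
Open Scope R_scope.

Definition pseudoultrametric (X : Type) (d : X -> X -> R) : Prop :=
  (forall x y, 0 <= d x y) /\
  (forall x, d x x = 0) /\
  (forall x y, d x y = d y x) /\
  (forall x y z, d x y <= Rmax (d x z) (d z y)).

Definition ultrametric (X : Type) (d : X -> X -> R) : Prop :=
  pseudoultrametric X d /\ (forall x y, d x y = 0 -> x = y).

(* A function f : [0,oo) -> [0,oo), represented as f : R -> R together with
   the condition that it maps [0,oo) into [0,oo) (values on negatives are
   irrelevant). *)
Definition maps_nonneg (f : R -> R) : Prop :=
  forall t, 0 <= t -> 0 <= f t.

Definition upp_preserving (f : R -> R) : Prop :=
  forall (X : Type) (d : X -> X -> R),
    ultrametric X d -> pseudoultrametric X (fun x y => f (d x y)).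

(** For (a): testing f on the three-point ultrametric space with distances
    a, b, b (0 < a <= b) shows that f is nondecreasing on (0, oo).  So either
    f vanishes at some t0 > 0, and then on all of (0, t0], or f is positive on
    (0, oo), and then f o d separates points.

    For (b): pick 0 < c < r0 and let d be max(rho, c) off the diagonal; this
    is an ultrametric.  By the gap hypothesis every value of rho is either 0
    or >= r0 > c, so cutting d down to 0 at level c gives back rho, and the
    cut-off map t |-> (t if t > c, else 0) preserves pseudoultrametrics
    because it is nondecreasing and vanishes at 0. *)

From Stdlib Require Import Reals Lra ClassicalEpsilon.
Open Scope R_scope.

Lemma ultrametric_pseudoultrametric (X : Type) (d : X -> X -> R) :
  ultrametric X d -> pseudoultrametric X d.
Proof. intros [Hd _]. exact Hd. Qed.

Lemma Rmax_comp_le (f : R -> R) (a b : R) :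
  f (Rmax a b) <= Rmax (f a) (f b).
Proof. apply Rmax_case; [apply Rmax_l | apply Rmax_r]. Qed.

Lemma pseudoultrametric_comp_nondecreasing (X : Type) (d : X -> X -> R)
    (f : R -> R) :
  f 0 = 0 -> (forall s t, 0 <= s -> s <= t -> f s <= f t) ->
  pseudoultrametric X d -> pseudoultrametric X (fun x y => f (d x y)).
Proof.
  intros Hf0 Hf [Hpos [Hdiag [Hsym Htri]]].
  split; [| split; [| split]].
  - intros x y. rewrite <- Hf0. apply Hf; [lra | apply Hpos].
  - intros x. rewrite Hdiag. exact Hf0.
  - intros x y. rewrite Hsym. reflexivity.
  - intros x y z. eapply Rle_trans.
    + apply Hf; [apply Hpos | apply Htri].
    + apply Rmax_comp_le.
Qed.

Section ThreePoint.

Inductive three : Type := P1 | P2 | P3.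

Variables a b : R.
Hypothesis a_pos : 0 < a.
Hypothesis a_le_b : a <= b.

Definition three_dist (x y : three) : R :=
  match x, y with
  | P1, P1 | P2, P2 | P3, P3 => 0
  | P1, P2 | P2, P1 => a
  | _, _ => b
  end.

Lemma three_dist_ultrametric : ultrametric three three_dist.
Proof.
  split; [split; [| split; [| split]] |].
  - intros [] []; simpl; lra.
  - intros []; reflexivity.
  - intros [] []; reflexivity.
  - intros [] [] []; simpl; unfold Rmax; repeat destruct Rle_dec; lra.
  - intros [] []; simpl; intros; try reflexivity; lra.
Qed.

End ThreePoint.

Lemma upp_preserving_nondecreasing (f : R -> R) (a b : R) :
  upp_preserving f -> 0 < a -> a <= b -> f a <= f b.
Proof.
  intros Hf Ha Hab.
  destruct (Hf _ _ (three_dist_ultrametric a b Ha Hab)) as [_ [_ [_ Htri]]].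
  specialize (Htri P1 P2 P3). simpl in Htri.
  rewrite Rmax_left in Htri by lra. exact Htri.
Qed.

Lemma upp_preserving_vanish_below (f : R -> R) (t0 t : R) :
  maps_nonneg f -> upp_preserving f ->
  f t0 = 0 -> 0 < t -> t <= t0 -> f t = 0.
Proof.
  intros Hnn Hf Ht0 Ht Htt0.
  pose proof (upp_preserving_nondecreasing f t t0 Hf Ht Htt0).
  pose proof (Hnn t (Rlt_le _ _ Ht)). lra.
Qed.

Lemma ultrametric_comp_pos (X : Type) (d : X -> X -> R) (f : R -> R) :
  ultrametric X d -> upp_preserving f -> (forall t, 0 < t -> f t <> 0) ->
  ultrametric X (fun x y => f (d x y)).
Proof.
  intros Hd Hf Hpos. split; [exact (Hf X d Hd) |].
  destruct Hd as [[Hnn _] Hsep].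
  intros x y Hxy. apply Hsep.
  destruct (Rle_lt_or_eq_dec 0 (d x y) (Hnn x y)) as [Hlt | Heq].
  - exfalso. exact (Hpos _ Hlt Hxy).
  - symmetry. exact Heq.
Qed.

Definition cutoff (c t : R) : R := if Rle_dec t c then 0 else t.

Lemma cutoff_nondecreasing (c s t : R) :
  0 <= c -> s <= t -> cutoff c s <= cutoff c t.
Proof. intros Hc Hst. unfold cutoff. repeat destruct Rle_dec; lra. Qed.

Lemma cutoff_nonneg (c : R) : 0 <= c -> maps_nonneg (cutoff c).
Proof. intros Hc t Ht. unfold cutoff. destruct Rle_dec; lra. Qed.

Lemma cutoff_upp_preserving (c : R) : 0 <= c -> upp_preserving (cutoff c).
Proof.
  intros Hc X d Hd.
  apply pseudoultrametric_comp_nondecreasing.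
  - unfold cutoff. destruct Rle_dec; lra.
  - intros s t _ Hst. apply cutoff_nondecreasing; assumption.
  - apply ultrametric_pseudoultrametric. exact Hd.
Qed.

Section RaiseOffDiagonal.

Variables (X : Type) (rho : X -> X -> R) (c : R).
Hypothesis rho_pseudoultrametric : pseudoultrametric X rho.
Hypothesis c_pos : 0 < c.

Definition raise_off_diag (x y : X) : R :=
  if excluded_middle_informative (x = y) then 0 else Rmax (rho x y) c.

Lemma rho_le_raise_off_diag (x y : X) : rho x y <= raise_off_diag x y.
Proof.
  destruct rho_pseudoultrametric as [_ [Hdiag _]].
  unfold raise_off_diag. destruct excluded_middle_informative as [<- | _].
  - rewrite Hdiag. lra.
  - apply Rmax_l.
Qed.

Lemma raise_off_diag_ge (x y : X) : x <> y -> c <= raise_off_diag x y.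
Proof.
  intros Hxy. unfold raise_off_diag.
  destruct excluded_middle_informative; [contradiction | apply Rmax_r].
Qed.

Lemma raise_off_diag_ultrametric : ultrametric X raise_off_diag.
Proof.
  destruct rho_pseudoultrametric as [Hnn [Hdiag [Hsym Htri]]].
  assert (Hge0 : forall x y, 0 <= raise_off_diag x y).
  { intros x y. eapply Rle_trans; [apply Hnn | apply rho_le_raise_off_diag]. }
  split; [split; [exact Hge0 | split; [| split]] |].
  - intros x. unfold raise_off_diag.
    destruct excluded_middle_informative; [reflexivity | congruence].
  - intros x y. unfold raise_off_diag.
    destruct excluded_middle_informative, excluded_middle_informative;
      subst; try congruence; rewrite Hsym; reflexivity.
  - intros x y z.
    destruct (excluded_middle_informative (x = y)) as [<- | Hxy].
    { unfold raise_off_diag at 1.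
      destruct excluded_middle_informative; [| congruence].
      eapply Rle_trans; [apply Hge0 | apply Rmax_l]. }
    unfold raise_off_diag at 1.
    destruct excluded_middle_informative; [contradiction |].
    apply Rmax_lub.
    + eapply Rle_trans; [apply Htri |].
      apply Rmax_lub.
      * eapply Rle_trans; [apply rho_le_raise_off_diag | apply Rmax_l].
      * eapply Rle_trans; [apply rho_le_raise_off_diag | apply Rmax_r].
    + destruct (excluded_middle_informative (x = z)) as [<- | Hxz].
      * eapply Rle_trans; [apply (raise_off_diag_ge _ _ Hxy) | apply Rmax_r].
      * eapply Rle_trans; [apply (raise_off_diag_ge _ _ Hxz) | apply Rmax_l].
  - intros x y. unfold raise_off_diag.
    destruct excluded_middle_informative; [intros _; assumption |].
    pose proof (Rmax_r (rho x y) c). lra.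
Qed.

Lemma cutoff_raise_off_diag (r0 : R) (x y : X) :
  c < r0 -> (forall x y, rho x y < r0 -> rho x y = 0) ->
  cutoff c (raise_off_diag x y) = rho x y.
Proof.
  intros Hcr0 Hgap.
  destruct rho_pseudoultrametric as [Hnn [Hdiag _]].
  unfold raise_off_diag, cutoff.
  destruct excluded_middle_informative as [<- | _].
  - rewrite Hdiag. destruct Rle_dec; lra.
  - destruct (Rlt_dec (rho x y) r0) as [Hlt | Hge].
    + rewrite (Hgap x y Hlt), Rmax_right by lra.
      destruct Rle_dec; lra.
    + rewrite Rmax_left by lra. destruct Rle_dec; lra.
Qed.

End RaiseOffDiagonal.

Theorem proposition2p5 :
  (forall (X : Type) (d : X -> X -> R) (f : R -> R),
      ultrametric X d -> maps_nonneg f -> upp_preserving f ->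
      ultrametric X (fun x y => f (d x y)) \/
      exists r0, 0 < r0 /\
        forall x y, 0 < d x y -> d x y < r0 -> f (d x y) = 0)
  /\
  (forall (Y : Type) (rho : Y -> Y -> R),
      pseudoultrametric Y rho -> ~ ultrametric Y rho ->
      (exists r0, 0 < r0 /\ forall x y, rho x y < r0 -> rho x y = 0) ->
      exists (f : R -> R) (d : Y -> Y -> R),
        maps_nonneg f /\ upp_preserving f /\ ultrametric Y d /\
        forall x y, rho x y = f (d x y)).
Proof.
  split.
  - intros X d f Hd Hnn Hf.
    destruct (classic (exists t0, 0 < t0 /\ f t0 = 0)) as [[t0 [Ht0 Hft0]] | Hpos].
    + right. exists t0. split; [exact Ht0 |].
      intros x y Hxy Hlt.
      exact (upp_preserving_vanish_below f t0 _ Hnn Hf Hft0 Hxy (Rlt_le _ _ Hlt)).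
    + left. apply ultrametric_comp_pos; [exact Hd | exact Hf |].
      intros t Ht Hft. apply Hpos. exists t. split; assumption.
  -
    intros Y rho Hrho _ [r0 [Hr0 Hgap]].
    exists (cutoff (r0 / 2)), (raise_off_diag Y rho (r0 / 2)).
    split; [| split; [| split]].
    + apply cutoff_nonneg. lra.
    + apply cutoff_upp_preserving. lra.
    + apply raise_off_diag_ultrametric; [exact Hrho | lra].
    + intros x y. symmetry.
      apply cutoff_raise_off_diag with r0; [exact Hrho | lra | lra | exact Hgap].
Qed.
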